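(* Consider the R-model with $f(\tau)=\sqrt\tau$, $g(\tau)=\sqrt\tau\ln\tau$ ($\tau>0$) and $\alpha=a/b$ non-constant. Then $d\chi\wedge d\pi=0$ (with $\chi=\dot p/\dot\rho$, $\pi=p/\rho$) if and only if $\beta=\alpha+\tilde c$ for a constant $\tilde c$ (necessarily $\tilde c\neq0$), where $\beta=a'/b'$. In that case $b(r)=e^{\alpha(r)/\tilde c}$ up to a constant factor, $p=\frac{1}{3\tau^2}$ and $$\rho=\frac{1}{3\tau^2}\frac{(2+\alpha+\ln\tau)(2+\alpha+\tilde c+\ln\tau)}{(\alpha+\ln\tau)(\alpha+\tilde c+\ln\tau)}.$$
   Context: An R-model admitting an orthogonal flat synchronisation is the metric $ds^2=-d\tau^2+(\partial_rY)^2dr^2+Y^2d\Omega^2$ ($d\Omega^2$ the unit 2-sphere metric), with $Y=Z^{2/3}$, $Z(\tau,r)=a(r)f(\tau)+b(r)g(\tau)$, where $f,g$ satisfy $\ddot f/f=\ddot g/g=-\frac34p(\tau)$ and $\dot gf-\dot fg=1$. It is a perfect fluid with $u=\partial_\tau$, $p=-\frac43\ddot f/f$, $\rho=\frac43\frac{\dot Z\,\dot Z'}{Z\,Z'}$ (prime $=\partial_r$, dot $=\partial_\tau$). Functions $a,b$ with $b\neq0$, $b'\neq0$; $\alpha=a/b$, $\beta=a'/b'$. *)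

From Stdlib Require Import Reals.
From Coquelicot Require Import Coquelicot.
Open Scope R_scope.

Definition fR (t : R) : R := sqrt t.
Definition gR (t : R) : R := sqrt t * ln t.

Definition Zfun (a b : R -> R) (t r : R) : R := a r * fR t + b r * gR t.
Definition Zt (a b : R -> R) (t r : R) : R := Derive (fun t' => Zfun a b t' r) t.
Definition Zr (a b : R -> R) (t r : R) : R := Derive (fun r' => Zfun a b t r') r.
Definition Ztr (a b : R -> R) (t r : R) : R := Derive (fun r' => Zt a b t r') r.

Definition pres (t : R) : R := - (4 / 3) * Derive (Derive fR) t / fR t.
Definition rho (a b : R -> R) (t r : R) : R :=
  4 / 3 * (Zt a b t r * Ztr a b t r) / (Zfun a b t r * Zr a b t r).

Definition piR (a b : R -> R) (t r : R) : R := pres t / rho a b t r.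
Definition chiR (a b : R -> R) (t r : R) : R :=
  Derive pres t / Derive (fun t' => rho a b t' r) t.

(* coefficient of dtau /\ dr in dchi /\ dpi *)
Definition dchi_wedge_dpi (a b : R -> R) (t r : R) : R :=
  Derive (fun t' => chiR a b t' r) t * Derive (fun r' => piR a b t r') r
  - Derive (fun r' => chiR a b t r') r * Derive (fun t' => piR a b t' r) t.

Definition alpha (a b : R -> R) (r : R) : R := a r / b r.
Definition beta (a b : R -> R) (r : R) : R := Derive a r / Derive b r.

Definition inI (r0 r1 : Rbar) (r : R) : Prop := Rbar_lt r0 r /\ Rbar_lt r r1.

(* the open set of spacetime points where chi and pi are defined *)
Definition in_dom (a b : R -> R) (r0 r1 : Rbar) (t r : R) : Prop :=
  0 < t /\ inI r0 r1 r /\ Zfun a b t r <> 0 /\ Zr a b t r <> 0 /\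
  rho a b t r <> 0 /\ Derive (fun t' => rho a b t' r) t <> 0.

From Stdlib Require Import Reals Lra.
From Coquelicot Require Import Coquelicot.
Open Scope R_scope.

(* With u = ln t + alpha and v = ln t + beta one has Z = sqrt t * b * u and
   Z' = sqrt t * b' * v, so p, rho, chi and pi are rational functions of t, u, v:
   pi = uv/((u+2)(v+2)) and chi = u^2 v^2/(W(W+2)) with W = uv + u + v.
   Along t both u and v move by dt/t, hence
   dchi /\ dpi = t^-1 (beta' - alpha') d(chi,pi)/d(u,v) dt /\ dr, and the
   Jacobian is a nonvanishing multiple of v - u = beta - alpha.  So the condition
   reads ((beta - alpha)^2)' = 0, i.e. beta = alpha + c.  Then alpha' = c b'/b:
   c = 0 would make alpha constant, and b exp(-alpha/c) is constant. *)

Lemma continuous_locally_neq0 (f : R -> R) x :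
  continuous f x -> f x <> 0 -> locally x (fun y => f y <> 0).
Proof. intros Hc Hx. exact (Hc (fun y => y <> 0) (open_neq 0 (f x) Hx)). Qed.

Lemma locally_pos t : 0 < t -> locally t (fun y => 0 < y).
Proof. intros Ht. apply (locally_interval _ t 0 p_infty); simpl; auto. Qed.

Lemma locally_inI r0 r1 r : inI r0 r1 r -> locally r (inI r0 r1).
Proof. intros [H0 H1]. apply (locally_interval _ r r0 r1); auto. now split. Qed.

Lemma inI_Rmin_Rmax r0 r1 r s x : inI r0 r1 r -> inI r0 r1 s ->
  Rmin r s <= x <= Rmax r s -> inI r0 r1 x.
Proof.
  unfold inI, Rmin, Rmax. intros [A B] [C D] E.
  destruct (Rle_dec r s); destruct r0; destruct r1; simpl in *; split; auto; lra.
Qed.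

Lemma is_derive_0_const_inI (f : R -> R) r0 r1 :
  (forall x, inI r0 r1 x -> is_derive f x 0) ->
  forall r s, inI r0 r1 r -> inI r0 r1 s -> f r = f s.
Proof.
  intros H r s Hr Hs.
  destruct (MVT_gen f r s (fun _ => 0)) as (c & _ & E).
  - intros x Hx. apply H, (inI_Rmin_Rmax r0 r1 r s); auto. lra.
  - intros x Hx. apply continuity_pt_filterlim, (@ex_derive_continuous R_AbsRing R_NormedModule).
    exists 0. apply H, (inI_Rmin_Rmax r0 r1 r s); auto.
  - lra.
Qed.

(* [f^2] is constant, so either [f] vanishes identically or it never vanishes and then [f' = 0]. *)
Lemma const_of_derive_mul_self_0 (f df : R -> R) r0 r1 :
  (forall x, inI r0 r1 x -> is_derive f x (df x)) ->
  (forall x, inI r0 r1 x -> df x * f x = 0) ->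
  forall r s, inI r0 r1 r -> inI r0 r1 s -> f r = f s.
Proof.
  intros Hf Hdf r s Hr Hs.
  assert (Hsq : forall x, inI r0 r1 x -> f x * f x = f s * f s).
  { intros x Hx. apply (is_derive_0_const_inI (fun x => f x * f x) r0 r1); auto.
    intros y Hy. replace 0 with (df y * f y + f y * df y) by (pose proof (Hdf y Hy); lra).
    apply (is_derive_mult f f); auto. intros; apply Rmult_comm. }
  destruct (Req_dec (f s) 0) as [Z|Z].
  - rewrite Z. pose proof (Hsq r Hr) as E. rewrite Z, Rmult_0_l in E.
    apply Rmult_integral in E. tauto.
  - apply (is_derive_0_const_inI f r0 r1); auto. intros x Hx.
    assert (Nx : f x <> 0).
    { intro E. pose proof (Hsq x Hx) as E'. rewrite E, Rmult_0_l in E'.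
      symmetry in E'. apply Rmult_integral in E'. tauto. }
    pose proof (Hdf x Hx) as E. apply Rmult_integral in E.
    destruct E as [E|E]; [|tauto]. rewrite <- E. auto.
Qed.

(* [auto_derive] leaves [Derive (fun x => f x) y], which [ring] and [field] do not
   identify with [Derive f y]. *)
Ltac fold_eta_Derive :=
  repeat match goal with
  | |- context [Derive (fun x => ?f x) ?y] => change (Derive (fun x => f x) y) with (Derive f y)
  end.

Lemma Zt_eq (a b : R -> R) t r : 0 < t ->
  Zt a b t r = (a r + b r * (ln t + 2)) / (2 * sqrt t).
Proof.
  intros Ht. unfold Zt, Zfun, fR, gR. apply is_derive_unique.
  auto_derive; [repeat split; lra|].
  assert (Hs : 0 < sqrt t) by (apply sqrt_lt_R0; lra).
  field_simplify; [|lra|lra]. rewrite pow2_sqrt by lra. field; lra.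
Qed.

Lemma Zr_eq (a b : R -> R) t r : ex_derive a r -> ex_derive b r ->
  Zr a b t r = sqrt t * (Derive a r + Derive b r * ln t).
Proof.
  intros Ha Hb. unfold Zr, Zfun, fR, gR. apply is_derive_unique.
  auto_derive; auto. fold_eta_Derive. ring.
Qed.

Lemma Ztr_eq (a b : R -> R) t r : 0 < t -> ex_derive a r -> ex_derive b r ->
  Ztr a b t r = (Derive a r + Derive b r * (ln t + 2)) / (2 * sqrt t).
Proof.
  intros Ht Ha Hb. unfold Ztr.
  rewrite (Derive_ext _ (fun r' => (a r' + b r' * (ln t + 2)) / (2 * sqrt t)))
    by (intros; apply Zt_eq; auto).
  assert (Hs : 0 < sqrt t) by (apply sqrt_lt_R0; lra).
  apply is_derive_unique. auto_derive; auto. fold_eta_Derive. field. lra.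
Qed.

Lemma pres_eq t : 0 < t -> pres t = 1 / (3 * t ^ 2).
Proof.
  intros Ht. unfold pres, fR.
  assert (Hs : 0 < sqrt t) by (apply sqrt_lt_R0; lra).
  rewrite (Derive_ext_loc _ (fun y => / (2 * sqrt y))).
  2:{ apply (filter_imp (fun y => 0 < y)); [|now apply locally_pos].
      intros y Hy. apply is_derive_unique. auto_derive; [lra|].
      field. apply Rgt_not_eq, sqrt_lt_R0; lra. }
  rewrite (is_derive_unique _ _ (- / (4 * t * sqrt t))).
  - field_simplify; try lra. rewrite pow2_sqrt by lra. field. lra.
  - auto_derive; [repeat split; lra|]. field_simplify; try lra.
    replace (sqrt t ^ 3) with (sqrt t * sqrt t ^ 2) by ring.
    rewrite pow2_sqrt by lra. field; lra.
Qed.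

Lemma Derive_pres_eq t : 0 < t -> Derive pres t = - 2 / (3 * t ^ 3).
Proof.
  intros Ht. rewrite (Derive_ext_loc _ (fun y => 1 / (3 * y ^ 2))).
  - apply is_derive_unique. auto_derive; [nra|]. field. lra.
  - apply (filter_imp (fun y => 0 < y)); [|now apply locally_pos].
    intros y Hy. now apply pres_eq.
Qed.

Definition Wuv (u v : R) : R := u * v + u + v.

Definition uv_admissible (u v : R) : Prop :=
  u <> 0 /\ v <> 0 /\ u + 2 <> 0 /\ v + 2 <> 0 /\ Wuv u v <> 0 /\ Wuv u v + 2 <> 0.

Definition rho_uv (t u v : R) : R := 1 / (3 * t ^ 2) * ((u + 2) / u) * ((v + 2) / v).
Definition chi_uv (u v : R) : R := u ^ 2 * v ^ 2 / (Wuv u v * (Wuv u v + 2)).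
Definition pi_uv (u v : R) : R := u * v / ((u + 2) * (v + 2)).

Definition chi_du (u v : R) : R :=
  2 * u * v ^ 2 * ((u + 1) * (v + 1) ^ 2 - 1) / (Wuv u v * (Wuv u v + 2)) ^ 2.
Definition chi_dv (u v : R) : R :=
  2 * u ^ 2 * v * ((v + 1) * (u + 1) ^ 2 - 1) / (Wuv u v * (Wuv u v + 2)) ^ 2.
Definition pi_du (u v : R) : R := 2 * v / ((v + 2) * (u + 2) ^ 2).
Definition pi_dv (u v : R) : R := 2 * u / ((u + 2) * (v + 2) ^ 2).

Lemma is_derive_chi_uv_comp (g1 g2 : R -> R) z d1 d2 :
  is_derive g1 z d1 -> is_derive g2 z d2 -> uv_admissible (g1 z) (g2 z) ->
  is_derive (fun z => chi_uv (g1 z) (g2 z)) z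
    (chi_du (g1 z) (g2 z) * d1 + chi_dv (g1 z) (g2 z) * d2).
Proof.
  intros H1 H2 (_ & _ & _ & _ & Hw & Hw2).
  unfold chi_uv, chi_du, chi_dv, Wuv in *.
  auto_derive.
  - repeat split; try (eexists; eauto). now apply Rmult_integral_contrapositive_currified.
  - fold_eta_Derive. rewrite (is_derive_unique _ _ _ H1), (is_derive_unique _ _ _ H2).
    field. auto.
Qed.

Lemma is_derive_pi_uv_comp (g1 g2 : R -> R) z d1 d2 :
  is_derive g1 z d1 -> is_derive g2 z d2 -> uv_admissible (g1 z) (g2 z) ->
  is_derive (fun z => pi_uv (g1 z) (g2 z)) z
    (pi_du (g1 z) (g2 z) * d1 + pi_dv (g1 z) (g2 z) * d2).
Proof.
  intros H1 H2 (_ & _ & Hu & Hv & _).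
  unfold pi_uv, pi_du, pi_dv.
  auto_derive.
  - repeat split; try (eexists; eauto). now apply Rmult_integral_contrapositive_currified.
  - fold_eta_Derive. rewrite (is_derive_unique _ _ _ H1), (is_derive_unique _ _ _ H2).
    field. auto.
Qed.

Lemma jacobian_chi_pi_eq u v : uv_admissible u v ->
  chi_du u v * pi_dv u v - chi_dv u v * pi_du u v =
  4 * u ^ 2 * v ^ 2 * (v - u) /
  (Wuv u v ^ 2 * (Wuv u v + 2) * (u + 2) ^ 2 * (v + 2) ^ 2).
Proof.
  intros (Hu & Hv & Hu2 & Hv2 & Hw & Hw2).
  unfold chi_du, chi_dv, pi_du, pi_dv, Wuv in *. field. auto.
Qed.

Section AtRadius.

Variables (a b : R -> R) (r : R).
Hypotheses (a_der : ex_derive a r) (b_der : ex_derive b r).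
Hypotheses (b_neq0 : b r <> 0) (Db_neq0 : Derive b r <> 0).

Lemma Zfun_uv t : Zfun a b t r = sqrt t * b r * (ln t + alpha a b r).
Proof. unfold Zfun, fR, gR, alpha. field. exact b_neq0. Qed.

Lemma Zr_uv t : Zr a b t r = sqrt t * Derive b r * (ln t + beta a b r).
Proof. rewrite Zr_eq by auto. unfold beta. field. exact Db_neq0. Qed.

Lemma rho_eq t : 0 < t ->
  rho a b t r = rho_uv t (ln t + alpha a b r) (ln t + beta a b r).
Proof.
  intros Ht. unfold rho. rewrite Zt_eq, Ztr_eq, Zfun_uv, Zr_uv by auto.
  assert (Hs : 0 < sqrt t) by (apply sqrt_lt_R0; lra).
  replace (a r + b r * (ln t + 2)) with (b r * (ln t + alpha a b r + 2))
    by (unfold alpha; field; auto).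
  replace (Derive a r + Derive b r * (ln t + 2))
    with (Derive b r * (ln t + beta a b r + 2)) by (unfold beta; field; auto).
  unfold rho_uv.
  replace (t ^ 2) with (sqrt t ^ 2 * sqrt t ^ 2) by (rewrite pow2_sqrt by lra; ring).
  generalize (ln t + alpha a b r) (ln t + beta a b r). intros u v.
  unfold Rdiv. rewrite !Rinv_mult.
  set (iu := / u). set (iv := / v).
  field. repeat split; lra || auto.
Qed.

Lemma Derive_rho_eq t : 0 < t -> ln t + alpha a b r <> 0 -> ln t + beta a b r <> 0 ->
  Derive (fun t' => rho a b t' r) t =
  let u := ln t + alpha a b r in let v := ln t + beta a b r in
  - 2 * (Wuv u v * (Wuv u v + 2)) / (3 * t ^ 3 * u ^ 2 * v ^ 2).
Proof.
  intros Ht Hu Hv.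
  rewrite (Derive_ext_loc _ (fun t' => rho_uv t' (ln t' + alpha a b r) (ln t' + beta a b r))).
  - apply is_derive_unique. unfold rho_uv, Wuv. auto_derive.
    + repeat split; auto; nra.
    + field. repeat split; auto; nra.
  - apply (filter_imp (fun t' => 0 < t')); [|now apply locally_pos].
    intros t' Ht'. now apply rho_eq.
Qed.

Lemma chiR_eq t : 0 < t -> ln t + alpha a b r <> 0 -> ln t + beta a b r <> 0 ->
  chiR a b t r = chi_uv (ln t + alpha a b r) (ln t + beta a b r).
Proof.
  intros Ht Hu Hv. unfold chiR. rewrite Derive_pres_eq, Derive_rho_eq by auto.
  unfold chi_uv. revert Hu Hv. generalize (ln t + alpha a b r) (ln t + beta a b r).
  intros u v Hu Hv. cbv zeta.
  destruct (Req_dec (Wuv u v * (Wuv u v + 2)) 0) as [E|E].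
  - rewrite E. unfold Rdiv. rewrite !Rmult_0_r, Rmult_0_l, !Rinv_0. ring.
  - field. repeat split; auto; nra.
Qed.

Lemma piR_eq t : 0 < t -> ln t + alpha a b r <> 0 -> ln t + beta a b r <> 0 ->
  piR a b t r = pi_uv (ln t + alpha a b r) (ln t + beta a b r).
Proof.
  intros Ht Hu Hv. unfold piR. rewrite pres_eq, rho_eq by auto.
  unfold rho_uv, pi_uv. revert Hu Hv. generalize (ln t + alpha a b r) (ln t + beta a b r).
  intros u v Hu Hv.
  unfold Rdiv. rewrite !Rinv_mult, !Rinv_inv.
  set (iu2 := / (u + 2)). set (iv2 := / (v + 2)).
  field. repeat split; auto; nra.
Qed.

Lemma in_dom_iff r0 r1 t : in_dom a b r0 r1 t r <->
  0 < t /\ inI r0 r1 r /\ uv_admissible (ln t + alpha a b r) (ln t + beta a b r).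
Proof.
  unfold in_dom, uv_admissible.
  rewrite Zfun_uv, Zr_uv.
  split.
  - intros (Ht & Hr & HZ & HZr & Hrho & HDrho).
    assert (Hu : ln t + alpha a b r <> 0) by (intro E; apply HZ; rewrite E; ring).
    assert (Hv : ln t + beta a b r <> 0) by (intro E; apply HZr; rewrite E; ring).
    rewrite rho_eq in Hrho by auto. rewrite Derive_rho_eq in HDrho by auto.
    unfold rho_uv in Hrho. cbv zeta in HDrho.
    do 2 (split; [assumption|]).
    repeat split; auto; intro E; [apply Hrho | apply Hrho | apply HDrho | apply HDrho];
      rewrite E; unfold Rdiv; ring.
  - intros (Ht & Hr & Hu & Hv & Hu2 & Hv2 & Hw & Hw2).
    assert (Hs : 0 < sqrt t) by (apply sqrt_lt_R0; lra).
    rewrite rho_eq, Derive_rho_eq by auto. unfold rho_uv. cbv zeta.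
    do 2 (split; [assumption|]).
    repeat split; auto;
      repeat (apply Rmult_integral_contrapositive_currified || apply Rinv_neq_0_compat);
      auto; nra.
Qed.

End AtRadius.

Lemma is_derive_ln_plus_const x t : 0 < t -> is_derive (fun t' => ln t' + x) t (/ t).
Proof. intros Ht. auto_derive; [lra | ring]. Qed.

Lemma is_derive_const_plus (f : R -> R) c r : ex_derive f r ->
  is_derive (fun r' => c + f r') r (Derive f r).
Proof. intros Hf. auto_derive; auto. fold_eta_Derive. ring. Qed.

Section OnInterval.

Variables (a b : R -> R) (r0 r1 : Rbar).
Hypotheses (a_der : forall r, inI r0 r1 r -> ex_derive a r)
           (b_der : forall r, inI r0 r1 r -> ex_derive b r)
           (Da_der : forall r, inI r0 r1 r -> ex_derive (Derive a) r)
           (Db_der : forall r, inI r0 r1 r -> ex_derive (Derive b) r)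
           (b_neq0 : forall r, inI r0 r1 r -> b r <> 0)
           (Db_neq0 : forall r, inI r0 r1 r -> Derive b r <> 0).

Lemma is_derive_alpha r : inI r0 r1 r ->
  is_derive (alpha a b) r (Derive b r * (beta a b r - alpha a b r) / b r).
Proof.
  intros Hr. pose proof (b_neq0 r Hr). pose proof (Db_neq0 r Hr).
  unfold alpha, beta. auto_derive; [repeat split; auto|].
  fold_eta_Derive. field. auto.
Qed.

Lemma ex_derive_beta r : inI r0 r1 r -> ex_derive (beta a b) r.
Proof. intros Hr. unfold beta. auto_derive. repeat split; auto. Qed.

Lemma chi_pi_locally_in_t t r : 0 < t -> inI r0 r1 r ->
  ln t + alpha a b r <> 0 -> ln t + beta a b r <> 0 ->
  locally t (fun t' =>
    chiR a b t' r = chi_uv (ln t' + alpha a b r) (ln t' + beta a b r) /\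
    piR a b t' r = pi_uv (ln t' + alpha a b r) (ln t' + beta a b r)).
Proof.
  intros Ht Hr Hu Hv.
  assert (Hcont : forall x, continuous (fun t' => ln t' + x) t)
    by (intros x; eapply (@ex_derive_continuous R_AbsRing R_NormedModule), ex_intro,
        is_derive_ln_plus_const, Ht).
  apply (filter_imp (fun t' => (0 < t' /\ ln t' + alpha a b r <> 0) /\ ln t' + beta a b r <> 0)).
  - intros t' ((Ht' & Hu') & Hv').
    split; [apply chiR_eq | apply piR_eq]; auto.
  - repeat apply filter_and; auto using locally_pos, continuous_locally_neq0.
Qed.

Lemma chi_pi_locally_in_r t r : 0 < t -> inI r0 r1 r ->
  ln t + alpha a b r <> 0 -> ln t + beta a b r <> 0 ->
  locally r (fun r' =>
    chiR a b t r' = chi_uv (ln t + alpha a b r') (ln t + beta a b r') /\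
    piR a b t r' = pi_uv (ln t + alpha a b r') (ln t + beta a b r')).
Proof.
  intros Ht Hr Hu Hv.
  assert (Hcont : forall f, ex_derive f r -> continuous (fun r' => ln t + f r') r)
    by (intros f Hf; eapply (@ex_derive_continuous R_AbsRing R_NormedModule), ex_intro,
        is_derive_const_plus, Hf).
  assert (Hal : ex_derive (alpha a b) r) by (eexists; now apply is_derive_alpha).
  apply (filter_imp (fun r' => (inI r0 r1 r' /\ ln t + alpha a b r' <> 0) /\
                               ln t + beta a b r' <> 0)).
  - intros r' ((Hr' & Hu') & Hv').
    split; [apply chiR_eq | apply piR_eq]; auto.
  - apply filter_and; [apply filter_and; [now apply locally_inI|] |];
      apply continuous_locally_neq0; auto using ex_derive_beta.
Qed.

Lemma wedge_eq t r : in_dom a b r0 r1 t r ->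
  dchi_wedge_dpi a b t r =
  let u := ln t + alpha a b r in let v := ln t + beta a b r in
  / t * (Derive (beta a b) r - Derive (alpha a b) r) *
  (chi_du u v * pi_dv u v - chi_dv u v * pi_du u v).
Proof.
  intros D. assert (Hr : inI r0 r1 r) by apply D.
  apply in_dom_iff in D as (Ht & _ & Hadm); auto.
  pose proof Hadm as (Hu & Hv & _).
  pose proof (chi_pi_locally_in_t t r Ht Hr Hu Hv) as Lt.
  pose proof (chi_pi_locally_in_r t r Ht Hr Hu Hv) as Lr.
  assert (Hal : is_derive (fun r' => ln t + alpha a b r') r (Derive (alpha a b) r))
    by (apply is_derive_const_plus; eexists; now apply is_derive_alpha).
  assert (Hbe : is_derive (fun r' => ln t + beta a b r') r (Derive (beta a b) r))
    by (apply is_derive_const_plus, ex_derive_beta, Hr).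
  pose proof (is_derive_ln_plus_const (alpha a b r) t Ht) as Hut.
  pose proof (is_derive_ln_plus_const (beta a b r) t Ht) as Hvt.
  cbv zeta. set (u := ln t + alpha a b r) in *. set (v := ln t + beta a b r) in *.
  assert (Dchi_t : Derive (fun t' => chiR a b t' r) t = chi_du u v * / t + chi_dv u v * / t).
  { rewrite (Derive_ext_loc _ (fun t' => chi_uv (ln t' + alpha a b r) (ln t' + beta a b r)))
      by exact (filter_imp _ _ (fun _ H => proj1 H) Lt).
    apply is_derive_unique, is_derive_chi_uv_comp; auto. }
  assert (Dpi_t : Derive (fun t' => piR a b t' r) t = pi_du u v * / t + pi_dv u v * / t).
  { rewrite (Derive_ext_loc _ (fun t' => pi_uv (ln t' + alpha a b r) (ln t' + beta a b r)))
      by exact (filter_imp _ _ (fun _ H => proj2 H) Lt).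
    apply is_derive_unique, is_derive_pi_uv_comp; auto. }
  assert (Dchi_r : Derive (fun r' => chiR a b t r') r =
                   chi_du u v * Derive (alpha a b) r + chi_dv u v * Derive (beta a b) r).
  { rewrite (Derive_ext_loc _ (fun r' => chi_uv (ln t + alpha a b r') (ln t + beta a b r')))
      by exact (filter_imp _ _ (fun _ H => proj1 H) Lr).
    apply is_derive_unique, is_derive_chi_uv_comp; auto. }
  assert (Dpi_r : Derive (fun r' => piR a b t r') r =
                  pi_du u v * Derive (alpha a b) r + pi_dv u v * Derive (beta a b) r).
  { rewrite (Derive_ext_loc _ (fun r' => pi_uv (ln t + alpha a b r') (ln t + beta a b r')))
      by exact (filter_imp _ _ (fun _ H => proj2 H) Lr).
    apply is_derive_unique, is_derive_pi_uv_comp; auto. }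
  unfold dchi_wedge_dpi. rewrite Dchi_t, Dpi_t, Dchi_r, Dpi_r. ring.
Qed.


Lemma wedge_zero_of_beta_sub_alpha_const c :
  (forall r, inI r0 r1 r -> beta a b r = alpha a b r + c) ->
  forall t r, in_dom a b r0 r1 t r -> dchi_wedge_dpi a b t r = 0.
Proof.
  intros Hc t r D. rewrite wedge_eq by exact D. cbv zeta.
  assert (Hr : inI r0 r1 r) by apply D.
  assert (E : Derive (beta a b) r = Derive (alpha a b) r).
  { rewrite (Derive_ext_loc _ (fun r' => alpha a b r' + c)).
    - apply is_derive_unique. auto_derive; [eexists; now apply is_derive_alpha|].
      fold_eta_Derive. ring.
    - apply (filter_imp (inI r0 r1)); auto using locally_inI. }
  rewrite E. ring.
Qed.

(* At [ln t = |alpha| + |beta| + 1] both [u] and [v] are at least 1. *)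
Lemma exists_in_dom r : inI r0 r1 r -> exists t, in_dom a b r0 r1 t r.
Proof.
  intros Hr. exists (exp (Rabs (alpha a b r) + Rabs (beta a b r) + 1)).
  apply in_dom_iff; auto. rewrite ln_exp.
  pose proof (Rle_abs (- alpha a b r)). pose proof (Rle_abs (- beta a b r)).
  rewrite Rabs_Ropp in *. pose proof (Rabs_pos (alpha a b r)). pose proof (Rabs_pos (beta a b r)).
  split; [apply exp_pos|]. split; [exact Hr|].
  unfold uv_admissible, Wuv. repeat split; intro; nra.
Qed.

Lemma derive_mul_beta_sub_alpha_0 :
  (forall t r, in_dom a b r0 r1 t r -> dchi_wedge_dpi a b t r = 0) ->
  forall r, inI r0 r1 r ->
  (Derive (beta a b) r - Derive (alpha a b) r) * (beta a b r - alpha a b r) = 0.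
Proof.
  intros Hw r Hr. destruct (exists_in_dom r Hr) as [t D].
  pose proof (Hw t r D) as W. rewrite wedge_eq in W by exact D. cbv zeta in W.
  apply in_dom_iff in D as (Ht & _ & Hadm); auto.
  rewrite jacobian_chi_pi_eq in W by exact Hadm.
  destruct Hadm as (Hu & Hv & Hu2 & Hv2 & Hw0 & Hw2).
  revert W Hu Hv Hu2 Hv2 Hw0 Hw2. unfold Wuv.
  replace (beta a b r - alpha a b r) with ((ln t + beta a b r) - (ln t + alpha a b r)) by ring.
  generalize (ln t + alpha a b r) (ln t + beta a b r)
    (Derive (beta a b) r - Derive (alpha a b) r). intros u v d W Hu Hv Hu2 Hv2 Hw0 Hw2.
  set (Den := (u * v + u + v) ^ 2 * (u * v + u + v + 2) * (u + 2) ^ 2 * (v + 2) ^ 2) in W.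
  replace (d * (v - u))
    with (t * Den / (4 * u ^ 2 * v ^ 2) * (/ t * d * (4 * u ^ 2 * v ^ 2 * (v - u) / Den))).
  - rewrite W. ring.
  - unfold Den. field. repeat split; auto. lra.
Qed.

Lemma beta_sub_alpha_const_of_wedge_0 rs : inI r0 r1 rs ->
  (forall t r, in_dom a b r0 r1 t r -> dchi_wedge_dpi a b t r = 0) ->
  exists c, forall r, inI r0 r1 r -> beta a b r = alpha a b r + c.
Proof.
  intros Hrs Hw. exists (beta a b rs - alpha a b rs). intros r Hr.
  enough (beta a b r - alpha a b r = beta a b rs - alpha a b rs) by lra.
  apply (const_of_derive_mul_self_0 (fun r => beta a b r - alpha a b r)
           (fun r => Derive (beta a b) r - Derive (alpha a b) r) r0 r1); auto.
  - intros x Hx. apply @is_derive_minus.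
    + apply Derive_correct, ex_derive_beta, Hx.
    + apply Derive_correct. eexists. now apply is_derive_alpha.
  - now apply derive_mul_beta_sub_alpha_0.
Qed.

Lemma shift_neq0_of_alpha_nonconst c rs ss : inI r0 r1 rs -> inI r0 r1 ss ->
  alpha a b rs <> alpha a b ss ->
  (forall r, inI r0 r1 r -> beta a b r = alpha a b r + c) -> c <> 0.
Proof.
  intros Hrs Hss Hn Hc c0. apply Hn.
  apply (is_derive_0_const_inI (alpha a b) r0 r1); auto.
  intros x Hx. pose proof (is_derive_alpha x Hx) as H.
  rewrite (Hc x Hx), c0 in H. replace 0 with (Derive b x * (alpha a b x + 0 - alpha a b x) / b x).
  - exact H.
  - field. auto.
Qed.

(* [alpha' = c b' / b], i.e. [(ln b)' = alpha' / c]. *)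
Lemma b_eq_exp_alpha c rs : inI r0 r1 rs ->
  (forall r, inI r0 r1 r -> beta a b r = alpha a b r + c) -> c <> 0 ->
  exists K, K <> 0 /\ forall r, inI r0 r1 r -> b r = K * exp (alpha a b r / c).
Proof.
  intros Hrs Hc c0.
  set (phi := fun r => b r * exp (- (alpha a b r / c))).
  assert (Hphi : forall r, inI r0 r1 r -> phi r = phi rs).
  { intros r Hr. apply (is_derive_0_const_inI phi r0 r1); auto.
    intros x Hx. pose proof (is_derive_alpha x Hx) as H. rewrite (Hc x Hx) in H.
    pose proof (b_neq0 x Hx).
    unfold phi. auto_derive.
    - repeat split; auto. eexists; exact H.
    - fold_eta_Derive. rewrite (is_derive_unique _ _ _ H). field. auto. }
  exists (phi rs). split.
  - apply Rmult_integral_contrapositive_currified; auto. apply Rgt_not_eq, exp_pos.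
  - intros r Hr. rewrite <- (Hphi r Hr). unfold phi.
    rewrite Rmult_assoc, <- exp_plus, Rplus_opp_l, exp_0. ring.
Qed.

Lemma rho_eq_of_beta_sub_alpha_const c :
  (forall r, inI r0 r1 r -> beta a b r = alpha a b r + c) ->
  forall t r, 0 < t -> inI r0 r1 r ->
    alpha a b r + ln t <> 0 -> alpha a b r + c + ln t <> 0 ->
    rho a b t r =
      1 / (3 * t ^ 2) *
      ((2 + alpha a b r + ln t) * (2 + alpha a b r + c + ln t)) /
      ((alpha a b r + ln t) * (alpha a b r + c + ln t)).
Proof.
  intros Hc t r Ht Hr Hu Hv.
  rewrite rho_eq, (Hc r Hr) by auto. unfold rho_uv. field. repeat split; nra.
Qed.

End OnInterval.

Theorem mainTheorem9 (a b : R -> R) (r0 r1 : Rbar)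
  (Ha : forall (n : nat) (r : R), inI r0 r1 r -> ex_derive_n a n r)
  (Hb : forall (n : nat) (r : R), inI r0 r1 r -> ex_derive_n b n r)
  (Hb0 : forall r, inI r0 r1 r -> b r <> 0)
  (Hb1 : forall r, inI r0 r1 r -> Derive b r <> 0)
  (Hnc : exists r s, inI r0 r1 r /\ inI r0 r1 s /\ alpha a b r <> alpha a b s) :
  ((forall t r, in_dom a b r0 r1 t r -> dchi_wedge_dpi a b t r = 0) <->
   (exists c : R, forall r, inI r0 r1 r -> beta a b r = alpha a b r + c))
  /\
  (forall c : R, (forall r, inI r0 r1 r -> beta a b r = alpha a b r + c) ->
     c <> 0
     /\ (exists K : R, K <> 0 /\
           forall r, inI r0 r1 r -> b r = K * exp (alpha a b r / c))
     /\ (forall t, 0 < t -> pres t = 1 / (3 * t ^ 2))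
     /\ (forall t r, 0 < t -> inI r0 r1 r ->
           alpha a b r + ln t <> 0 -> alpha a b r + c + ln t <> 0 ->
           rho a b t r =
             1 / (3 * t ^ 2) *
             ((2 + alpha a b r + ln t) * (2 + alpha a b r + c + ln t)) /
             ((alpha a b r + ln t) * (alpha a b r + c + ln t)))).
Proof.
  assert (a_der : forall r, inI r0 r1 r -> ex_derive a r) by exact (Ha 1%nat).
  assert (b_der : forall r, inI r0 r1 r -> ex_derive b r) by exact (Hb 1%nat).
  assert (Da_der : forall r, inI r0 r1 r -> ex_derive (Derive a) r) by exact (Ha 2%nat).
  assert (Db_der : forall r, inI r0 r1 r -> ex_derive (Derive b) r) by exact (Hb 2%nat).
  destruct Hnc as (rs & ss & Hrs & Hss & Hn).
  split; [split|].
  - now apply (beta_sub_alpha_const_of_wedge_0 a b r0 r1) with rs.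
  - intros [c Hc]. now apply (wedge_zero_of_beta_sub_alpha_const a b r0 r1) with c.
  - intros c Hc.
    assert (c0 : c <> 0) by now apply (shift_neq0_of_alpha_nonconst a b r0 r1) with rs ss.
    repeat split; auto using pres_eq.
    + now apply (b_eq_exp_alpha a b r0 r1) with rs.
    + now apply (rho_eq_of_beta_sub_alpha_const a b r0 r1).
Qed.
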